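(* Let $(X,\varphi)$ be an irreducible Smale space and $\mathcal R_1$ a Markov partition with $\max_{R\in\mathcal R_1}\operatorname{diam}R\le\varepsilon_X''$, generating $(\mathcal R_n)_{n\ge0}$. Then for every $n\in\mathbb N$, $$\mathcal R_{n+1}=\{R\in\varphi(\mathcal R_n)\vee\mathcal R_n\vee\varphi^{-1}(\mathcal R_n):\operatorname{int}(R)\ne\varnothing\}.$$
   Context: A Smale space $(X,\varphi)$: compact metric space $(X,d)$, homeomorphism $\varphi$, constants $\varepsilon_X>0,\lambda_X>1$ and a continuous bracket $[\cdot,\cdot]$ on $\{(x,y):d(x,y)\le\varepsilon_X\}$ with $[x,x]=x$, $[x,[y,z]]=[x,z]$, $[[x,y],z]=[x,z]$, $\varphi([x,y])=[\varphi(x),\varphi(y)]$ (whenever defined), such that $\varphi$ contracts distances by $\lambda_X^{-1}$ on local stable sets $X^s(x,\varepsilon)=\{y:d(x,y)<\varepsilon,[x,y]=y\}$ and $\varphi^{-1}$ contracts by $\lambda_X^{-1}$ on local unstable sets $X^u(x,\varepsilon)=\{y:d(x,y)<\varepsilon,[y,x]=y\}$. Irreducible: for nonempty open $U,V$ some $n\in\mathbb N$ has $\varphi^n(U)\cap V\ne\varnothing$. Fix $\varepsilon_X'\in(0,\varepsilon_X/2]$ with $d(x,y)\le\varepsilon_X'\Rightarrow d(x,[x,y]),d(y,[x,y])<\varepsilon_X/2$, and $\varepsilon_X''\in(0,\varepsilon_X'/12)$ with $d(x,y)\le\varepsilon_X''\Rightarrow d(\varphi^i x,\varphi^i y)\le\varepsilon_X'/2$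 ($|i|\le2$) and $d([x,y],x),d([x,y],y)\le\varepsilon_X'/4$. Rectangle: nonempty $R$, $\operatorname{diam}R\le\varepsilon_X'$, $[x,y]\in R$ for $x,y\in R$; $X^{s/u}(x,R)=X^{s/u}(x,2\varepsilon_X')\cap R$; proper: closed with $R=\operatorname{cl}\operatorname{int}R$. Markov partition: finite cover by nonempty proper rectangles with disjoint interiors such that $\varphi(X^u(x,R_i))\supset X^u(\varphi x,R_j)$ and $\varphi(X^s(x,R_i))\subset X^s(\varphi x,R_j)$ whenever $x\in\operatorname{int}R_i\cap\varphi^{-1}(\operatorname{int}R_j)$. $\mathcal U\vee\mathcal W=\{U\cap W:U\in\mathcal U,W\in\mathcal W\}$, $\varphi(\mathcal U)=\{\varphi(U):U\in\mathcal U\}$. The generated sequence: $\mathcal R_0=\{X\}$, $\mathcal R_n=\{R\in\bigvee_{i=1-n}^{n-1}\varphi^{-i}(\mathcal R_1):\operatorname{int}R\ne\varnothing\}$. *)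

From Stdlib Require Import Reals List ZArith.
Open Scope R_scope.
Set Implicit Arguments.

Section Defs.
Variable X : Type.
Variable d : X -> X -> R.

Definition is_metric : Prop :=
  (forall x y, 0 <= d x y) /\ (forall x y, d x y = 0 <-> x = y) /\
  (forall x y, d x y = d y x) /\ (forall x y z, d x z <= d x y + d y z).

Definition is_open (U : X -> Prop) : Prop :=
  forall x, U x -> exists r, 0 < r /\ forall y, d x y < r -> U y.

Definition is_closed (A : X -> Prop) : Prop := is_open (fun x => ~ A x).

Definition interior (A : X -> Prop) : X -> Prop :=
  fun x => exists r, 0 < r /\ forall y, d x y < r -> A y.

Definition closure (A : X -> Prop) : X -> Prop :=
  fun x => forall r, 0 < r -> exists y, d x y < r /\ A y.

Definition is_compact_space : Prop :=
  forall (I : Type) (U : I -> X -> Prop),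
    (forall i, is_open (U i)) -> (forall x, exists i, U i x) ->
    exists l : list I, forall x, exists i, In i l /\ U i x.

Definition continuous_map (f : X -> X) : Prop :=
  forall x e, 0 < e -> exists delta, 0 < delta /\
    forall y, d x y < delta -> d (f x) (f y) < e.

Definition homeomorphism (f finv : X -> X) : Prop :=
  continuous_map f /\ continuous_map finv /\
  (forall x, f (finv x) = x) /\ (forall x, finv (f x) = x).

Definition iterZ (f finv : X -> X) (k : Z) (x : X) : X :=
  if (0 <=? k)%Z then Nat.iter (Z.to_nat k) f x
  else Nat.iter (Z.to_nat (- k)) finv x.

Definition Xs (br : X -> X -> X) (x : X) (e : R) : X -> Prop :=
  fun y => d x y < e /\ br x y = y.
Definition Xu (br : X -> X -> X) (x : X) (e : R) : X -> Prop :=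
  fun y => d x y < e /\ br y x = y.

(* Smale space (X,d,phi) with inverse phiinv, bracket br (a total function,
   only constrained on the domain {(x,y) : d x y <= epsX}), constants epsX, lam *)
Definition smale_space (phi phiinv : X -> X) (br : X -> X -> X)
    (epsX lam : R) : Prop :=
  is_metric /\ is_compact_space /\ homeomorphism phi phiinv /\
  0 < epsX /\ 1 < lam /\
  (forall x y, d x y <= epsX -> forall e, 0 < e -> exists delta, 0 < delta /\
     forall x' y', d x' y' <= epsX -> d x x' < delta -> d y y' < delta ->
       d (br x y) (br x' y') < e) /\
  (forall x, br x x = x) /\
  (forall x y z, d y z <= epsX -> d x (br y z) <= epsX -> d x z <= epsX ->
     br x (br y z) = br x z) /\
  (forall x y z, d x y <= epsX -> d (br x y) z <= epsX -> d x z <= epsX ->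
     br (br x y) z = br x z) /\
  (forall x y, d x y <= epsX -> d (phi x) (phi y) <= epsX ->
     phi (br x y) = br (phi x) (phi y)) /\
  (forall x y z, Xs br x epsX y -> Xs br x epsX z ->
     d (phi y) (phi z) <= / lam * d y z) /\
  (forall x y z, Xu br x epsX y -> Xu br x epsX z ->
     d (phiinv y) (phiinv z) <= / lam * d y z).

Definition irreducible (phi : X -> X) : Prop :=
  forall U V : X -> Prop, is_open U -> is_open V ->
    (exists x, U x) -> (exists x, V x) ->
    exists n : nat, (1 <= n)%nat /\
      exists x, U x /\ V (Nat.iter n phi x).

(* the constants eps'_X and eps''_X *)
Definition eps1_ok (br : X -> X -> X) (epsX eps1 : R) : Prop :=
  0 < eps1 /\ eps1 <= epsX / 2 /\
  forall x y, d x y <= eps1 -> d x (br x y) < epsX / 2 /\ d y (br x y) < epsX / 2.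

Definition eps2_ok (phi phiinv : X -> X) (br : X -> X -> X) (eps1 eps2 : R) : Prop :=
  0 < eps2 /\ eps2 < eps1 / 12 /\
  forall x y, d x y <= eps2 ->
    (forall i : Z, (-2 <= i <= 2)%Z ->
        d (iterZ phi phiinv i x) (iterZ phi phiinv i y) <= eps1 / 2) /\
    d (br x y) x <= eps1 / 4 /\ d (br x y) y <= eps1 / 4.

Definition diam_le (A : X -> Prop) (c : R) : Prop :=
  forall x y, A x -> A y -> d x y <= c.

Definition rectangle (br : X -> X -> X) (eps1 : R) (A : X -> Prop) : Prop :=
  (exists x, A x) /\ diam_le A eps1 /\
  (forall x y, A x -> A y -> A (br x y)).

Definition XsR (br : X -> X -> X) (eps1 : R) (x : X) (A : X -> Prop) : X -> Prop :=
  fun y => Xs br x (2 * eps1) y /\ A y.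
Definition XuR (br : X -> X -> X) (eps1 : R) (x : X) (A : X -> Prop) : X -> Prop :=
  fun y => Xu br x (2 * eps1) y /\ A y.

Definition proper_set (A : X -> Prop) : Prop :=
  is_closed A /\ forall x, A x <-> closure (interior A) x.

Definition finite_coll (P : (X -> Prop) -> Prop) : Prop :=
  exists l : list (X -> Prop), forall A, P A <-> In A l.

Definition markov_partition (phi : X -> X) (br : X -> X -> X) (eps1 : R)
    (P : (X -> Prop) -> Prop) : Prop :=
  finite_coll P /\
  (forall x, exists A, P A /\ A x) /\
  (forall A, P A -> rectangle br eps1 A /\ proper_set A) /\
  (forall A B, P A -> P B -> A <> B -> forall x, ~ (interior A x /\ interior B x)) /\
  (forall A B x, P A -> P B -> interior A x -> interior B (phi x) ->
     (forall y, XuR br eps1 (phi x) B y -> exists z, XuR br eps1 x A z /\ phi z = y) /\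
     (forall z, XsR br eps1 x A z -> XsR br eps1 (phi x) B (phi z))).

Definition img_coll (f : X -> X) (P : (X -> Prop) -> Prop) : (X -> Prop) -> Prop :=
  fun W => exists A, P A /\ W = (fun y => exists x, A x /\ y = f x).

Definition join3 (P Q S : (X -> Prop) -> Prop) : (X -> Prop) -> Prop :=
  fun W => exists A B C, P A /\ Q B /\ S C /\ W = (fun x => A x /\ B x /\ C x).

Definition nonempty_interior (A : X -> Prop) : Prop := exists x, interior A x.

Definition join_range (phi phiinv : X -> X) (P : (X -> Prop) -> Prop) (n : nat)
    : (X -> Prop) -> Prop :=
  fun W => exists U : Z -> X -> Prop,
    (forall i : Z, (1 - Z.of_nat n <= i <= Z.of_nat n - 1)%Z ->
       img_coll (iterZ phi phiinv (- i)) P (U i)) /\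
    W = (fun x => forall i : Z, (1 - Z.of_nat n <= i <= Z.of_nat n - 1)%Z -> U i x).

Definition generated (phi phiinv : X -> X) (P : (X -> Prop) -> Prop) (n : nat)
    : (X -> Prop) -> Prop :=
  match n with
  | O => fun W => W = (fun _ => True)
  | S _ => fun W => join_range phi phiinv P n W /\ nonempty_interior W
  end.

End Defs.

(* A member of R_n is a cylinder {x | phi^i x in A_i for |i| < n} with pieces
   A_i in R_1, and composing with phi or phi^-1 shifts the index window of a
   cylinder by one.  Hence every cylinder of R_(n+1) is the meet of three
   shifted cylinders of R_n.  Conversely, in such a meet with nonempty interior
   two pieces carrying the same index share an interior point, so they coincide
   because the members of R_1 have disjoint interiors; gluing the three piece
   sequences yields a cylinder of R_(n+1). *)

From Pilot Require Import Defs.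
From Stdlib Require Import Reals List ZArith Lia.
From Stdlib Require Import Classical FunctionalExtensionality PropExtensionality.
Open Scope R_scope.

Lemma pred_ext {X : Type} (A B : X -> Prop) : (forall x, A x <-> B x) -> A = B.
Proof.
  intros H; apply functional_extensionality; intros x; apply propositional_extensionality; auto.
Qed.

Lemma image_iff {X : Type} (f finv : X -> X) :
  (forall x, finv (f x) = x) -> (forall y, f (finv y) = y) ->
  forall (A : X -> Prop) y, (exists x, A x /\ y = f x) <-> A (finv y).
Proof.
  intros fK finvK A y; split.
  - intros [x [Ax ->]]; rewrite fK; exact Ax.
  - intros Ay; exists (finv y); rewrite finvK; auto.
Qed.

Lemma image_eq_preimage {X : Type} (f finv : X -> X) :
  (forall x, finv (f x) = x) -> (forall y, f (finv y) = y) ->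
  forall A : X -> Prop, (fun y => exists x, A x /\ y = f x) = (fun y => A (finv y)).
Proof. intros fK finvK A; apply pred_ext, (image_iff _ _ fK finvK). Qed.

Section Iterates.
Local Set Implicit Arguments.
Variables (X : Type) (phi phiinv : X -> X).
Hypothesis phiK : forall x, phiinv (phi x) = x.
Hypothesis phiinvK : forall x, phi (phiinv x) = x.

Lemma iterZ_succ k x : iterZ phi phiinv (k + 1) x = phi (iterZ phi phiinv k x).
Proof.
  unfold iterZ; destruct (Z.leb_spec 0 k).
  - rewrite (proj2 (Z.leb_le 0 (k + 1))) by lia.
    replace (Z.to_nat (k + 1)) with (S (Z.to_nat k)) by lia; reflexivity.
  - destruct (Z.eq_dec k (-1)) as [-> | Hk]; [simpl; now rewrite phiinvK |].
    rewrite (proj2 (Z.leb_gt 0 (k + 1))) by lia.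
    replace (Z.to_nat (- k)) with (S (Z.to_nat (- (k + 1)))) by lia.
    simpl; now rewrite phiinvK.
Qed.

Lemma iterZ_pred k x : iterZ phi phiinv (k - 1) x = phiinv (iterZ phi phiinv k x).
Proof.
  rewrite <- (phiK (iterZ phi phiinv (k - 1) x)), <- iterZ_succ.
  now replace (k - 1 + 1)%Z with k by lia.
Qed.

Lemma iterZ_add a b x :
  iterZ phi phiinv a (iterZ phi phiinv b x) = iterZ phi phiinv (a + b) x.
Proof.
  induction a as [| a IH | a IH] using Z.peano_ind; [reflexivity | |].
  - unfold Z.succ; rewrite iterZ_succ, IH, <- iterZ_succ; f_equal; lia.
  - unfold Z.pred; change (a + -1)%Z with (a - 1)%Z.
    rewrite iterZ_pred, IH, <- iterZ_pred; f_equal; lia.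
Qed.

Lemma iterZ_oppK k x : iterZ phi phiinv (- k) (iterZ phi phiinv k x) = x.
Proof. rewrite iterZ_add; now replace (- k + k)%Z with 0%Z by lia. Qed.

Lemma iterZ_Kopp k x : iterZ phi phiinv k (iterZ phi phiinv (- k) x) = x.
Proof. rewrite iterZ_add; now replace (k + - k)%Z with 0%Z by lia. Qed.

Definition cylinder (A : Z -> X -> Prop) (lo hi : Z) : X -> Prop :=
  fun x => forall i, (lo <= i <= hi)%Z -> A i (iterZ phi phiinv i x).

Definition is_cylinder (P : (X -> Prop) -> Prop) (lo hi : Z) (W : X -> Prop) : Prop :=
  exists A, (forall i, (lo <= i <= hi)%Z -> P (A i)) /\ W = cylinder A lo hi.

Lemma img_coll_iterZ_opp P i U :
  img_coll (iterZ phi phiinv (- i)) P U <->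
  exists B, P B /\ U = (fun y => B (iterZ phi phiinv i y)).
Proof.
  assert (image_eq : forall B : X -> Prop,
    (fun y => exists x, B x /\ y = iterZ phi phiinv (- i) x) = (fun y => B (iterZ phi phiinv i y)))
    by (apply image_eq_preimage; intros; [apply iterZ_Kopp | apply iterZ_oppK]).
  split; intros [B [HB ->]]; exists B; now rewrite image_eq.
Qed.

Lemma join_range_cylinder P n :
  join_range phi phiinv P n = is_cylinder P (1 - Z.of_nat n) (Z.of_nat n - 1).
Proof.
  apply pred_ext; intros W; split.
  - intros [U [HU ->]].
    exists (fun i z => U i (iterZ phi phiinv (- i) z)); split.
    + intros i Hi.
      destruct (proj1 (img_coll_iterZ_opp P i (U i)) (HU i Hi)) as [B [HB HUi]].
      enough (E : (fun z => U i (iterZ phi phiinv (- i) z)) = B) by now rewrite E.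
      rewrite HUi; apply pred_ext; intros z; now rewrite iterZ_Kopp.
    + apply pred_ext; intros x; unfold cylinder; split; intros Hx i Hi; specialize (Hx i Hi);
        now rewrite iterZ_oppK in *.
  - intros [A [HA ->]]; exists (fun i y => A i (iterZ phi phiinv i y)); split; [| reflexivity].
    intros i Hi; apply img_coll_iterZ_opp; eauto.
Qed.

Lemma cylinder_ext A B lo hi :
  (forall i, (lo <= i <= hi)%Z -> A i = B i) -> cylinder A lo hi = cylinder B lo hi.
Proof.
  intros E; apply pred_ext; intros x; split; intros Hx i Hi; [rewrite <- E | rewrite E]; auto.
Qed.

Lemma cylinder_phi A lo hi y :
  cylinder A lo hi (phi y) <-> cylinder (fun i => A (i - 1)%Z) (lo + 1) (hi + 1) y.
Proof.
  assert (shift : forall i, iterZ phi phiinv i (phi y) = iterZ phi phiinv (i + 1) y)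
    by (intros i; exact (iterZ_add i 1 y)).
  split; intros H i Hi.
  - specialize (H (i - 1)%Z ltac:(lia)); rewrite shift, Z.sub_add in H; exact H.
  - rewrite shift; specialize (H (i + 1)%Z ltac:(lia)); cbv beta in H.
    now rewrite Z.add_simpl_r in H.
Qed.

Lemma cylinder_phiinv A lo hi y :
  cylinder A lo hi (phiinv y) <-> cylinder (fun i => A (i + 1)%Z) (lo - 1) (hi - 1) y.
Proof.
  assert (shift : forall i, iterZ phi phiinv i (phiinv y) = iterZ phi phiinv (i - 1) y)
    by (intros i; exact (iterZ_add i (-1) y)).
  split; intros H i Hi.
  - specialize (H (i + 1)%Z ltac:(lia)); rewrite shift, Z.add_simpl_r in H; exact H.
  - rewrite shift; specialize (H (i - 1)%Z ltac:(lia)); cbv beta in H.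
    now rewrite Z.sub_add in H.
Qed.

Lemma cylinder_three_windows A lo hi x : (lo <= hi)%Z ->
  (cylinder A (lo - 1) (hi - 1) x /\ cylinder A lo hi x /\ cylinder A (lo + 1) (hi + 1) x)
  <-> cylinder A (lo - 1) (hi + 1) x.
Proof.
  intros Hle; split.
  - intros [H1 [H2 H3]] i Hi.
    destruct (Z_le_gt_dec i (hi - 1)); [apply H1; lia |].
    destruct (Z_le_gt_dec i hi); [apply H2 | apply H3]; lia.
  - intros H; repeat split; intros i Hi; apply H; lia.
Qed.

End Iterates.

Section Topology.
Local Set Implicit Arguments.
Variables (X : Type) (d : X -> X -> R).

Lemma interior_mono (A B : X -> Prop) x :
  (forall y, A y -> B y) -> Defs.interior d A x -> Defs.interior d B x.
Proof. intros AB [r [Hr Hball]]; exists r; split; auto. Qed.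

Lemma interior_preimage (g : X -> X) (A : X -> Prop) x :
  continuous_map d g -> Defs.interior d A (g x) -> Defs.interior d (fun y => A (g y)) x.
Proof.
  intros Hg [r [Hr Hball]]; destruct (Hg x r Hr) as [delta [Hdelta Hd]].
  exists delta; split; auto.
Qed.

Lemma continuous_iter (f : X -> X) n : continuous_map d f -> continuous_map d (Nat.iter n f).
Proof.
  intros Hf; induction n as [| n IH]; intros x e He; [exists e; auto |].
  destruct (Hf (Nat.iter n f x) e He) as [delta1 [Hdelta1 H1]].
  destruct (IH x delta1 Hdelta1) as [delta2 [Hdelta2 H2]].
  exists delta2; split; auto; intros y Hy; apply H1, H2, Hy.
Qed.

Lemma continuous_iterZ (phi phiinv : X -> X) k :
  continuous_map d phi -> continuous_map d phiinv -> continuous_map d (iterZ phi phiinv k).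
Proof. intros Hphi Hphiinv; unfold iterZ; destruct (0 <=? k)%Z; now apply continuous_iter. Qed.

End Topology.

Section Cylinders.
Local Set Implicit Arguments.
Variables (X : Type) (d : X -> X -> R) (phi phiinv : X -> X).
Hypothesis phiK : forall x, phiinv (phi x) = x.
Hypothesis phiinvK : forall x, phi (phiinv x) = x.
Hypothesis phi_cont : continuous_map d phi.
Hypothesis phiinv_cont : continuous_map d phiinv.
Variable P : (X -> Prop) -> Prop.
Hypothesis P_disjoint : forall A B, P A -> P B -> A <> B ->
  forall x, ~ (Defs.interior d A x /\ Defs.interior d B x).

Definition cylinders_with_interior (lo hi : Z) (S : X -> Prop) : Prop :=
  is_cylinder phi phiinv P lo hi S /\ nonempty_interior d S.

Lemma generated_succ m :
  generated d phi phiinv P (S m) = cylinders_with_interior (- Z.of_nat m) (Z.of_nat m).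
Proof.
  unfold generated, cylinders_with_interior.
  rewrite (join_range_cylinder _ _ phiK phiinvK).
  now replace (1 - Z.of_nat (S m))%Z with (- Z.of_nat m)%Z by lia;
    replace (Z.of_nat (S m) - 1)%Z with (Z.of_nat m) by lia.
Qed.

Lemma interior_cylinder_piece A lo hi W x0 i : (lo <= i <= hi)%Z ->
  (forall x, W x -> cylinder phi phiinv A lo hi x) -> Defs.interior d W x0 ->
  Defs.interior d (A i) (iterZ phi phiinv i x0).
Proof.
  intros Hi HW Hx0.
  apply interior_mono with (fun z => W (iterZ phi phiinv (- i) z)).
  - intros z Hz; rewrite <- (iterZ_Kopp _ _ phiK phiinvK i z); exact (HW _ Hz i Hi).
  - apply interior_preimage; [now apply continuous_iterZ |].
    now rewrite (iterZ_oppK _ _ phiK phiinvK).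
Qed.

Lemma cylinder_pieces_agree A B lo hi W x0 :
  (forall i, (lo <= i <= hi)%Z -> P (A i) /\ P (B i)) ->
  (forall x, W x -> cylinder phi phiinv A lo hi x) ->
  (forall x, W x -> cylinder phi phiinv B lo hi x) ->
  Defs.interior d W x0 -> forall i, (lo <= i <= hi)%Z -> A i = B i.
Proof.
  intros HAB HA HB Hx0 i Hi; apply NNPP; intros Hne.
  apply (P_disjoint (proj1 (HAB i Hi)) (proj2 (HAB i Hi)) Hne (x := iterZ phi phiinv i x0)).
  split; eapply interior_cylinder_piece; eauto.
Qed.

Lemma join3_of_cylinder lo hi W : (lo <= hi)%Z ->
  cylinders_with_interior (lo - 1) (hi + 1) W ->
  join3 (img_coll phi (cylinders_with_interior lo hi)) (cylinders_with_interior lo hi)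
        (img_coll phiinv (cylinders_with_interior lo hi)) W.
Proof.
  intros Hle [[A [HA ->]] [x0 Hx0]].
  set (S1 := cylinder phi phiinv (fun i => A (i - 1)%Z) lo hi).
  set (S2 := cylinder phi phiinv A lo hi).
  set (S3 := cylinder phi phiinv (fun i => A (i + 1)%Z) lo hi).
  assert (HW : forall x, cylinder phi phiinv A (lo - 1) (hi + 1) x <->
                         S1 (phiinv x) /\ S2 x /\ S3 (phi x)).
  { intros x; unfold S1, S3.
    rewrite (cylinder_phiinv _ _ phiK phiinvK), (cylinder_phi _ _ phiK phiinvK).
    rewrite (cylinder_ext phi phiinv _ A (lo := (lo - 1)%Z) (hi := (hi - 1)%Z))
      by (intros; f_equal; lia).
    rewrite (cylinder_ext phi phiinv _ A (lo := (lo + 1)%Z) (hi := (hi + 1)%Z))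
      by (intros; f_equal; lia).
    symmetry; now apply cylinder_three_windows. }
  assert (HS1 : Defs.interior d S1 (phiinv x0)).
  { apply interior_mono with (fun y => cylinder phi phiinv A (lo - 1) (hi + 1) (phi y)).
    - intros y Hy; rewrite <- (phiK y); apply HW, Hy.
    - apply interior_preimage; [assumption | now rewrite phiinvK]. }
  assert (HS2 : Defs.interior d S2 x0) by (apply interior_mono with (2 := Hx0); apply HW).
  assert (HS3 : Defs.interior d S3 (phi x0)).
  { apply interior_mono with (fun y => cylinder phi phiinv A (lo - 1) (hi + 1) (phiinv y)).
    - intros y Hy; rewrite <- (phiinvK y); apply HW, Hy.
    - apply interior_preimage; [assumption | now rewrite phiK]. }
  exists (fun y => exists x, S1 x /\ y = phi x), S2, (fun y => exists x, S3 x /\ y = phiinv x).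
  repeat split.
  - exists S1; repeat split; [| eexists; eassumption].
    exists (fun i => A (i - 1)%Z); split; [intros; apply HA; lia | reflexivity].
  - exists A; split; [intros; apply HA; lia | reflexivity].
  - eexists; eassumption.
  - exists S3; repeat split; [| eexists; eassumption].
    exists (fun i => A (i + 1)%Z); split; [intros; apply HA; lia | reflexivity].
  - apply pred_ext; intros x.
    now rewrite HW, (image_iff _ _ phiK phiinvK), (image_iff _ _ phiinvK phiK).
Qed.

Lemma cylinder_of_join3 lo hi W : (lo <= hi)%Z ->
  join3 (img_coll phi (cylinders_with_interior lo hi)) (cylinders_with_interior lo hi)
        (img_coll phiinv (cylinders_with_interior lo hi)) W ->
  nonempty_interior d W -> is_cylinder phi phiinv P (lo - 1) (hi + 1) W.
Proof.
  intros Hle [T1 [T2 [T3 [[S1 [[[C1 [HC1 ->]] _] ->]]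
    [[[C2 [HC2 ->]] _] [[S3 [[[C3 [HC3 ->]] _] ->]] ->]]]]]] [x0 Hx0].
  set (W := fun x : X => _ /\ _) in Hx0 |- *.
  set (C1' := fun i => C1 (i + 1)%Z); set (C3' := fun i => C3 (i - 1)%Z).
  assert (HW : forall x, W x <-> cylinder phi phiinv C1' (lo - 1) (hi - 1) x /\
      cylinder phi phiinv C2 lo hi x /\ cylinder phi phiinv C3' (lo + 1) (hi + 1) x).
  { intros x; unfold W, C1', C3'.
    rewrite (image_iff _ _ phiK phiinvK), (image_iff _ _ phiinvK phiK).
    now rewrite (cylinder_phiinv _ _ phiK phiinvK), (cylinder_phi _ _ phiK phiinvK). }
  assert (E1 : forall i, (lo <= i <= hi - 1)%Z -> C1' i = C2 i).
  { apply (cylinder_pieces_agree (W := W) (x0 := x0)); auto.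
    - intros i Hi; split; [apply HC1 | apply HC2]; lia.
    - intros x Hx i Hi; apply (proj1 (proj1 (HW x) Hx)); lia.
    - intros x Hx i Hi; apply (proj1 (proj2 (proj1 (HW x) Hx))); lia. }
  assert (E3 : forall i, (lo + 1 <= i <= hi)%Z -> C3' i = C2 i).
  { apply (cylinder_pieces_agree (W := W) (x0 := x0)); auto.
    - intros i Hi; split; [apply HC3 | apply HC2]; lia.
    - intros x Hx i Hi; apply (proj2 (proj2 (proj1 (HW x) Hx))); lia.
    - intros x Hx i Hi; apply (proj1 (proj2 (proj1 (HW x) Hx))); lia. }
  set (A := fun i => if (i <? lo)%Z then C1' i else if (hi <? i)%Z then C3' i else C2 i).
  exists A; split.
  - intros i Hi; unfold A, C1', C3'.
    destruct (Z.ltb_spec i lo); [apply HC1; lia |].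
    destruct (Z.ltb_spec hi i); [apply HC3 | apply HC2]; lia.
  - apply pred_ext; intros x; rewrite HW, <- cylinder_three_windows by exact Hle.
    rewrite (cylinder_ext phi phiinv C1' A (lo := (lo - 1)%Z)),
      (cylinder_ext phi phiinv C2 A (lo := lo)),
      (cylinder_ext phi phiinv C3' A (lo := (lo + 1)%Z)); [reflexivity | ..];
      intros i Hi; unfold A; destruct (Z.ltb_spec i lo), (Z.ltb_spec hi i);
      solve [reflexivity | lia | apply E1; lia | symmetry; apply E1; lia
            | apply E3; lia | symmetry; apply E3; lia].
Qed.

Lemma cylinders_with_interior_join3 lo hi W : (lo <= hi)%Z ->
  cylinders_with_interior (lo - 1) (hi + 1) W <->
  join3 (img_coll phi (cylinders_with_interior lo hi)) (cylinders_with_interior lo hi)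
        (img_coll phiinv (cylinders_with_interior lo hi)) W /\ nonempty_interior d W.
Proof.
  intros Hle; split.
  - intros HW; split; [now apply join3_of_cylinder | apply HW].
  - intros [HJ HW]; split; [now apply cylinder_of_join3 | exact HW].
Qed.

End Cylinders.


Theorem lemma5p9 (X : Type) (d : X -> X -> R) (phi phiinv : X -> X)
    (br : X -> X -> X) (epsX lam eps1 eps2 : R) (R1 : (X -> Prop) -> Prop) :
  smale_space d phi phiinv br epsX lam ->
  irreducible d phi ->
  eps1_ok d br epsX eps1 ->
  eps2_ok d phi phiinv br eps1 eps2 ->
  markov_partition d phi br eps1 R1 ->
  (forall A, R1 A -> diam_le d A eps2) ->
  forall n : nat, (1 <= n)%nat ->
    forall W : X -> Prop,
      generated d phi phiinv R1 (S n) W <->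
      (join3 (img_coll phi (generated d phi phiinv R1 n))
             (generated d phi phiinv R1 n)
             (img_coll phiinv (generated d phi phiinv R1 n)) W
       /\ nonempty_interior d W).
Proof.
  intros Hsmale _ _ _ Hmarkov _ n Hn W.
  destruct Hsmale as [_ [_ [[phi_cont [phiinv_cont [phiinvK phiK]]] _]]].
  destruct Hmarkov as [_ [_ [_ [R1_disjoint _]]]].
  destruct n as [| m]; [lia |].
  rewrite !(generated_succ d _ _ phiK phiinvK).
  replace (- Z.of_nat (S m))%Z with (- Z.of_nat m - 1)%Z by lia.
  replace (Z.of_nat (S m)) with (Z.of_nat m + 1)%Z by lia.
  apply cylinders_with_interior_join3; auto; lia.
Qed.
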